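(* Let $\mathbb O$ be a finite set of consecutive integers containing $0$, and let $\theta=0$. Let $x(0)\in\mathbb O^n$. If neither $\mathcal V_{<0}(x(0))=\{i: x_i(0)<0\}$ nor $\mathcal V_{>0}(x(0))=\{i: x_i(0)>0\}$ contains a non-empty strictly cohesive set, then there exists a finite legal update sequence from $x(0)$ along which the system reaches the consensus state $(0,\dots,0)$.
   Context: Let $n\ge1$, $\mathcal V=\{1,\dots,n\}$, and let $W=(w_{ij})$ be an $n\times n$ row-stochastic matrix (nonnegative entries, each row summing to $1$). For $x\in\mathbb O^n$, $i\in\mathcal V$, $z\in\mathbb O$, define $C^i_{\mathrm{social}}(z;x)=\sum_{j=1}^n w_{ij}|z-x_j|$ and $P_i(x)=\{z\in\mathbb O: C^i_{\mathrm{social}}(z;x)\le C^i_{\mathrm{social}}(x_i;x),\ |z-\theta|\le |x_i-\theta|\}$. A legal update sequence from $x(0)$ is a finite sequence $(i_1,z_1),\dots,(i_T,z_T)$ with $i_t\in\mathcal V$, generating $x(1),\dots,x(T)$ where $x(t)$ is obtained from $x(t-1)$ by setting coordinate $i_t$ to $z_t$, such that $z_t\in P_{i_t}(x(t-1))$ for every $t$. A set $\mathcal M\subseteq\mathcal V$ is strictly cohesive if $\sum_{j\in\mathcal M}w_{ij}>\tfrac12$ for every $i\in\mathcal M$. *)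

From HB Require Import structures.
From mathcomp Require Import all_boot all_order all_algebra.
Set Implicit Arguments. Unset Strict Implicit. Unset Printing Implicit Defensive.
Import Order.TTheory GRing.Theory Num.Theory.
Local Open Scope ring_scope.

Definition inO (a b : int) (z : int) : bool := (a <= z) && (z <= b).

Definition row_stochastic (R : realFieldType) (n : nat) (W : 'M[R]_n) : Prop :=
  (forall i j, 0 <= W i j) /\ (forall i, \sum_(j < n) W i j = 1).

Definition Csocial (R : realFieldType) (n : nat) (W : 'M[R]_n)
  (i : 'I_n) (z : int) (x : 'I_n -> int) : R :=
  \sum_(j < n) W i j * (`|z - x j|%:~R).

Definition inP (R : realFieldType) (n : nat) (W : 'M[R]_n) (a b theta : int)
  (x : 'I_n -> int) (i : 'I_n) (z : int) : Prop :=
  inO a b z /\ Csocial W i z x <= Csocial W i (x i) x /\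
  `|z - theta| <= `|x i - theta|.

Definition upd (n : nat) (x : 'I_n -> int) (i : 'I_n) (z : int) : 'I_n -> int :=
  fun j => if j == i then z else x j.

Fixpoint legal (R : realFieldType) (n : nat) (W : 'M[R]_n) (a b theta : int)
  (x : 'I_n -> int) (s : seq ('I_n * int)) : Prop :=
  match s with
  | [::] => True
  | (i, z) :: s' => inP W a b theta x i z /\ legal W a b theta (upd x i z) s'
  end.

Fixpoint final (n : nat) (x : 'I_n -> int) (s : seq ('I_n * int)) : 'I_n -> int :=
  match s with
  | [::] => x
  | (i, z) :: s' => final (upd x i z) s'
  end.

Definition strictly_cohesive (R : realFieldType) (n : nat) (W : 'M[R]_n)
  (M : {set 'I_n}) : Prop :=
  forall i, i \in M -> \sum_(j in M) W i j > 1 / 2.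

Definition Vneg (n : nat) (x : 'I_n -> int) : {set 'I_n} := [set i | x i < 0].
Definition Vpos (n : nat) (x : 'I_n -> int) : {set 'I_n} := [set i | x i > 0].

From HB Require Import structures.
From mathcomp Require Import all_boot all_order all_algebra.
From mathcomp Require Import zify lra.
Import Order.TTheory GRing.Theory Num.Theory.
Set Implicit Arguments. Unset Strict Implicit.
Local Open Scope ring_scope.

(* Idea: if S = V_{<0}(x) is non-empty and contains no strictly cohesive set,
   then S itself is not strictly cohesive, so some i in S puts weight at most
   1/2 on S.  Moving x_i one step up brings it closer to every x_j >= 0 (weight
   at least 1/2) and moves it away by at most 1 from the others, so its social
   cost does not increase; it also gets closer to 0.  Such moves create no new
   negative or positive agents, so the hypothesis persists, while sum_i |x_i|
   strictly decreases: iterating (and arguing symmetrically on V_{>0}) reaches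
   consensus at 0. *)

Definition no_cohesive_subset (R : realFieldType) (n : nat) (W : 'M[R]_n)
    (S : {set 'I_n}) : Prop :=
  ~ exists M : {set 'I_n}, M != set0 /\ M \subset S /\ strictly_cohesive W M.

Lemma no_cohesive_subsetS (R : realFieldType) (n : nat) (W : 'M[R]_n)
    (S S' : {set 'I_n}) :
  S' \subset S -> no_cohesive_subset W S -> no_cohesive_subset W S'.
Proof.
move=> sS'S noS [M [M0 [sMS' cohM]]]; apply: noS; exists M.
by split=> //; split=> //; apply: subset_trans sMS' sS'S.
Qed.

Lemma no_cohesive_subset_light (R : realFieldType) (n : nat) (W : 'M[R]_n)
    (S : {set 'I_n}) :
  no_cohesive_subset W S -> S != set0 ->
  exists2 i, i \in S & \sum_(j in S) W i j <= 1 / 2.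
Proof.
move=> noS S0; case: (pickP [pred i | (i \in S) && (\sum_(j in S) W i j <= 1 / 2)]).
  by move=> i /andP[iS light]; exists i.
move=> none; exfalso; apply: noS; exists S; split=> //; split=> // i iS.
by move: (none i); rewrite /= iS /= ltNge => ->.
Qed.

Lemma Csocial_opp (R : realFieldType) (n : nat) (W : 'M[R]_n) i z x :
  Csocial W i (- z) (fun j => - x j) = Csocial W i z x.
Proof. by apply: eq_bigr => j _; rewrite -opprD normrN. Qed.

Lemma Vneg_opp (n : nat) (x : 'I_n -> int) : Vneg (fun j => - x j) = Vpos x.
Proof. by apply/setP => j; rewrite !inE oppr_lt0. Qed.

Definition norm1 (n : nat) (x : 'I_n -> int) : nat := (\sum_(i < n) absz (x i))%N.

Lemma norm1_upd_lt (n : nat) (x : 'I_n -> int) i z :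
  (absz z < absz (x i))%N -> (norm1 (upd x i z) < norm1 x)%N.
Proof.
move=> lt_z_xi; rewrite /norm1 (bigD1 i) //= [X in (_ < X)%N](bigD1 i) //=.
rewrite /upd eqxx (eq_bigr (fun j => absz (x j))) => [|j /negbTE -> //].
by rewrite ltn_add2r.
Qed.

Lemma Vneg_upd_subset (n : nat) (x : 'I_n -> int) i z :
  (z < 0 -> x i < 0) -> Vneg (upd x i z) \subset Vneg x.
Proof. by move=> z_neg; apply/subsetP => j; rewrite !inE /upd; case: eqP => [->|]. Qed.

Lemma Vpos_upd_subset (n : nat) (x : 'I_n -> int) i z :
  (0 < z -> 0 < x i) -> Vpos (upd x i z) \subset Vpos x.
Proof. by move=> z_pos; apply/subsetP => j; rewrite !inE /upd; case: eqP => [->|]. Qed.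

Lemma Vneg_Vpos_set0_eq0 (n : nat) (x : 'I_n -> int) i :
  Vneg x = set0 -> Vpos x = set0 -> x i = 0.
Proof.
move=> /setP/(_ i) + /setP/(_ i); rewrite !inE; lia.
Qed.

Section MoveTowardZero.

Variables (R : realFieldType) (n : nat) (W : 'M[R]_n).
Hypothesis W_stochastic : row_stochastic W.

Lemma signed_weight_le0 i (P : pred 'I_n) :
  \sum_(j | P j) W i j <= 1 / 2 ->
  \sum_(j < n) W i j * ((if P j then 1 else -1 : int)%:~R) <= 0.
Proof.
have [_ W1] := W_stochastic; move=> light.
rewrite (bigID P) /= -[X in _ + X]opprK -sumrN.
rewrite (eq_bigr (W i)) => [|j ->]; last by rewrite mulr1.
rewrite [X in _ - X](eq_bigr (W i)) => [|j /negbTE ->]; last by rewrite mulrN1 opprK.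
have -> : \sum_(j | ~~ P j) W i j = 1 - \sum_(j | P j) W i j.
  by have := W1 i; rewrite (bigID P) /= => <-; rewrite addrAC subrr add0r.
move: light; lra.
Qed.

(* Pointwise, |x_i + 1 - x_j| <= |x_i - x_j| + (1 if x_j < 0 else -1). *)
Lemma Csocial_succ_le x i :
  x i < 0 -> \sum_(j in Vneg x) W i j <= 1 / 2 ->
  Csocial W i (x i + 1) x <= Csocial W i (x i) x.
Proof.
have [W0 _] := W_stochastic; move=> xi_neg light.
pose sign j : int := if x j < 0 then 1 else -1.
apply: (@le_trans _ _ (\sum_(j < n) W i j * (`|x i - x j| + sign j)%:~R)).
  apply: ler_sum => j _; apply: ler_wpM2l => //; rewrite ler_int /sign.
  by case: ifP => xj_neg; lia.
under eq_bigr do rewrite intrD mulrDr.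
rewrite big_split /= gerDl signed_weight_le0 //.
by move: light; under eq_bigl => j do rewrite inE.
Qed.

Lemma Csocial_pred_le x i :
  0 < x i -> \sum_(j in Vpos x) W i j <= 1 / 2 ->
  Csocial W i (x i - 1) x <= Csocial W i (x i) x.
Proof.
move=> xi_pos light.
have := @Csocial_succ_le (fun j => - x j) i.
rewrite Vneg_opp oppr_lt0 => /(_ xi_pos light).
by rewrite addrC -opprB !Csocial_opp.
Qed.

Lemma exists_move_toward0 (a b : int) (x : 'I_n -> int) :
  a <= 0 <= b -> (forall i, inO a b (x i)) ->
  no_cohesive_subset W (Vneg x) -> no_cohesive_subset W (Vpos x) ->
  (Vneg x != set0) || (Vpos x != set0) ->
  exists i z, [/\ inP W a b 0 x i z, (absz z < absz (x i))%N,
                  z < 0 -> x i < 0 & 0 < z -> 0 < x i].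
Proof.
move=> /andP[a_le0 b_ge0] xO noNeg noPos.
have [Vneg0 /= Vpos0 | Vneg0 _] := eqVneq (Vneg x) set0.
  have [i] := no_cohesive_subset_light noPos Vpos0; rewrite inE => xi_pos light.
  have := xO i; rewrite /inO => xiO.
  exists i, (x i - 1); split; try lia.
  by split; [rewrite /inO; lia | split; [exact: Csocial_pred_le | lia]].
have [i] := no_cohesive_subset_light noNeg Vneg0; rewrite inE => xi_neg light.
have := xO i; rewrite /inO => xiO.
exists i, (x i + 1); split; try lia.
by split; [rewrite /inO; lia | split; [exact: Csocial_succ_le | lia]].
Qed.

Lemma legal_path_to_consensus0 (a b : int) (x : 'I_n -> int) :
  a <= 0 <= b -> (forall i, inO a b (x i)) ->
  no_cohesive_subset W (Vneg x) -> no_cohesive_subset W (Vpos x) ->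
  exists s : seq ('I_n * int), legal W a b 0 x s /\ (forall i, final x s i = 0).
Proof.
move=> ab0; have [k] := ubnP (norm1 x).
elim: k x => // k IH x norm_lt xO noNeg noPos.
have [moving | /norP[/negbNE/eqP Vneg0 /negbNE/eqP Vpos0]] :=
  boolP ((Vneg x != set0) || (Vpos x != set0)); last first.
  by exists [::]; split=> // i; apply: Vneg_Vpos_set0_eq0.
have [i [z [legal_iz lt_z_xi z_neg z_pos]]] :=
  exists_move_toward0 ab0 xO noNeg noPos moving.
have norm_upd_lt : (norm1 (upd x i z) < k)%N.
  by have := norm1_upd_lt lt_z_xi; lia.
have updO j : inO a b (upd x i z j).
  by rewrite /upd; case: eqP => _; [case: legal_iz | exact: xO].
have [s [legal_s final_s]] := IH _ norm_upd_lt updO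
  (no_cohesive_subsetS (Vneg_upd_subset z_neg) noNeg)
  (no_cohesive_subsetS (Vpos_upd_subset z_pos) noPos).
by exists ((i, z) :: s).
Qed.

End MoveTowardZero.

Theorem theorem5 (R : realFieldType) (n : nat) (W : 'M[R]_n) (a b : int)
  (x0 : 'I_n -> int) :
  (0 < n)%N ->
  row_stochastic W ->
  a <= 0 <= b ->
  (forall i, inO a b (x0 i)) ->
  ~ (exists M : {set 'I_n}, M != set0 /\ M \subset Vneg x0 /\ strictly_cohesive W M) ->
  ~ (exists M : {set 'I_n}, M != set0 /\ M \subset Vpos x0 /\ strictly_cohesive W M) ->
  exists s : seq ('I_n * int),
    legal W a b 0 x0 s /\ (forall i, final x0 s i = 0).
Proof.
move=> _ W_stochastic ab0 x0O noNeg noPos.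
exact: (legal_path_to_consensus0 W_stochastic ab0 x0O noNeg noPos).
Qed.
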